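(* Let $(M,g)$ be a Riemannian manifold and $\mathfrak{X}$ a Killing vector field on $M$. Then at every point $|\mathfrak{X}|^2|\nabla\mathfrak{X}|^2\ge2|\nabla_{\mathfrak{X}}\mathfrak{X}|^2$.
   Context: $|\nabla\mathfrak{X}|^2=\sum_i|\nabla_{e_i}\mathfrak{X}|^2$ for an orthonormal basis $(e_i)$ of the tangent space; $\nabla$ is the Levi-Civita connection of $g$. *)

(* Local-coordinate model of a Riemannian manifold:
   a chart = an open set U of R^n, with the metric g_{ij} and the vector field
   X given by their component functions in these coordinates. *)
From HB Require Import structures.
From mathcomp Require Import all_boot all_order all_algebra.
From mathcomp Require Import all_classical all_reals all_analysis.
Set Implicit Arguments. Unset Strict Implicit. Unset Printing Implicit Defensive.
Import Order.TTheory GRing.Theory Num.Theory.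
Import numFieldNormedType.Exports.
Local Open Scope classical_set_scope.
Local Open Scope ring_scope.

Section Riemann.
Variables (R : realType) (n : nat).

Definition coord_partial (i : 'I_n) (f : 'rV[R]_n -> R) : 'rV[R]_n -> R :=
  fun x => 'D_(delta_mx 0 i) f x.

Definition iter_partial (s : seq 'I_n) (f : 'rV[R]_n -> R) : 'rV[R]_n -> R :=
  foldr coord_partial f s.

Definition smooth_on (U : set 'rV[R]_n) (f : 'rV[R]_n -> R) : Prop :=
  forall (s : seq 'I_n) (x : 'rV[R]_n), U x -> differentiable (iter_partial s f) x.

Definition ip (G : 'M[R]_n) (u v : 'rV[R]_n) : R :=
  \sum_(i < n) \sum_(j < n) u 0 i * G i j * v 0 j.

Definition riemannian_metric_on (U : set 'rV[R]_n) (g : 'rV[R]_n -> 'M[R]_n) : Prop :=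
  (forall i j, smooth_on U (fun y => g y i j)) /\
  (forall x, U x -> (g x)^T = g x /\
     forall v : 'rV[R]_n, v != 0 -> 0 < ip (g x) v v).

Definition smooth_vector_field_on (U : set 'rV[R]_n) (X : 'rV[R]_n -> 'rV[R]_n) : Prop :=
  forall k, smooth_on U (fun y => X y 0 k).

Definition christoffel (g : 'rV[R]_n -> 'M[R]_n) (x : 'rV[R]_n) (k i j : 'I_n) : R :=
  2^-1 * \sum_(l < n) (invmx (g x)) k l *
    (coord_partial i (fun y => g y j l) x + coord_partial j (fun y => g y i l) x
     - coord_partial l (fun y => g y i j) x).

Definition lc_nabla (g : 'rV[R]_n -> 'M[R]_n) (X : 'rV[R]_n -> 'rV[R]_n)
    (x v : 'rV[R]_n) : 'rV[R]_n :=
  \row_k (\sum_(j < n) v 0 j * coord_partial j (fun y => X y 0 k) x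
          + \sum_(i < n) \sum_(j < n) christoffel g x k i j * v 0 i * X x 0 j).

(* Killing field: Lie derivative L_X g = 0, in coordinates
   X^k d_k g_{ij} + g_{kj} d_i X^k + g_{ik} d_j X^k = 0 *)
Definition killing_on (U : set 'rV[R]_n) (g : 'rV[R]_n -> 'M[R]_n)
    (X : 'rV[R]_n -> 'rV[R]_n) : Prop :=
  forall x, U x -> forall i j : 'I_n,
    \sum_(k < n) (X x 0 k * coord_partial k (fun y => g y i j) x
                  + g x k j * coord_partial i (fun y => X y 0 k) x
                  + g x i k * coord_partial j (fun y => X y 0 k) x) = 0.

Definition orthonormal_basis (G : 'M[R]_n) (E : 'M[R]_n) : Prop :=
  forall i j : 'I_n, ip G (row i E) (row j E) = (i == j)%:R.

End Riemann.

(* At a point p, let N be the matrix of v |-> nabla_v X; the Killing equation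
   says exactly that N g is skew-symmetric.  In a g-orthonormal frame E, with
   F = E^-1, the inequality becomes
   2 |c B|^2 <= |c|^2 |B|^2 for the skew matrix B = E N F = E (N g) E^T and the
   coordinates c = X F of X.  With y = c B and s = |c|^2 one has c . y = 0 by
   skewness, hence the sum of squares of the entries of s B - (c^T y - y^T c)
   equals s (s |B|^2 - 2 |y|^2), which is therefore nonnegative. *)
From HB Require Import structures.
From mathcomp Require Import all_boot all_order all_algebra.
From mathcomp Require Import all_classical all_reals all_analysis.
From mathcomp Require Import ring lra.
Import Order.TTheory GRing.Theory Num.Theory.
Import numFieldNormedType.Exports.
Set Implicit Arguments.
Unset Strict Implicit.
Unset Printing Implicit Defensive.
Local Open Scope ring_scope.

Definition sqnorm {R : pzSemiRingType} {n : nat} (u : 'rV[R]_n) : R :=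
  \sum_(k < n) u 0 k ^+ 2.

Lemma sqnormE {R : comPzRingType} {n : nat} (u : 'rV[R]_n) :
  sqnorm u = (u *m u^T) 0 0.
Proof. by rewrite mxE; apply: eq_bigr => k _; rewrite mxE expr2. Qed.

Lemma sqnorm0 {R : pzSemiRingType} {n : nat} : sqnorm (0 : 'rV[R]_n) = 0.
Proof. by rewrite /sqnorm big1 // => k _; rewrite mxE expr0n. Qed.

Lemma sqnorm_ge0 {R : realDomainType} {n : nat} (u : 'rV[R]_n) : 0 <= sqnorm u.
Proof. by apply: sumr_ge0 => k _; exact: sqr_ge0. Qed.

Lemma sqnorm_eq0 {R : realDomainType} {n : nat} (u : 'rV[R]_n) :
  (sqnorm u == 0) = (u == 0).
Proof.
apply/eqP/eqP => [u0|->]; last exact: sqnorm0.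
apply/rowP => k; apply/eqP; rewrite mxE -sqrf_eq0; apply/eqP.
by apply: (psumr_eq0P _ u0) => // i _; exact: sqr_ge0.
Qed.

Section SkewRowBound.
Variables (R : realFieldType) (n : nat) (B : 'M[R]_n).
Hypothesis skewB : B^T = - B.

Lemma skew_mxE i j : B j i = - B i j.
Proof. by have := congr1 (fun M : 'M[R]_n => M i j) skewB; rewrite !mxE. Qed.

Variable c : 'rV[R]_n.
Local Notation y := (c *m B).

Lemma skew_form0 : \sum_j c 0 j * y 0 j = 0.
Proof.
set a := c *m B *m c^T.
have aN : a^T = - a by rewrite /a !trmx_mul trmxK skewB mulNmx mulmxN mulmxA.
have : a^T 0 0 = - a 0 0 by rewrite aN mxE.
rewrite [a^T 0 0]mxE.
have -> : a 0 0 = \sum_j c 0 j * y 0 j.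
  by rewrite mxE; apply: eq_bigr => j _; rewrite [c^T _ _]mxE mulrC.
lra.
Qed.

Lemma skew_residual_sqnorm :
  \sum_j \sum_i (sqnorm c * B j i - (c 0 j * y 0 i - y 0 j * c 0 i)) ^+ 2
  = sqnorm c * (sqnorm c * \sum_j sqnorm (row j B) - 2 * sqnorm y).
Proof.
set s := sqnorm c; set Y := sqnorm y.
have yE i : y 0 i = \sum_j c 0 j * B j i by rewrite mxE.
have By1 : \sum_j \sum_i B j i * c 0 j * y 0 i = Y.
  rewrite exchange_big; apply: eq_bigr => i _.
  rewrite expr2 [in X in _ = X * _](yE i) mulr_suml.
  by apply: eq_bigr => j _; ring.
have By2 : \sum_j \sum_i B j i * y 0 j * c 0 i = - Y.
  rewrite -sumrN; apply: eq_bigr => j _.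
  have cBj : \sum_i c 0 i * B j i = - y 0 j.
    by rewrite yE -sumrN; apply: eq_bigr => i _; rewrite skew_mxE mulrN.
  by rewrite expr2 -mulrN -cBj mulr_sumr; apply: eq_bigr => i _; ring.
have cy1 : \sum_j \sum_i c 0 j ^+ 2 * y 0 i ^+ 2 = s * Y.
  by rewrite /s /sqnorm mulr_suml; apply: eq_bigr => j _; rewrite mulr_sumr.
have cy2 : \sum_j \sum_i y 0 j ^+ 2 * c 0 i ^+ 2 = s * Y.
  by rewrite /s /sqnorm mulrC mulr_suml; apply: eq_bigr => j _; rewrite mulr_sumr.
have cy3 : \sum_j \sum_i c 0 j * y 0 i * y 0 j * c 0 i = 0.
  transitivity ((\sum_j c 0 j * y 0 j) * (\sum_i c 0 i * y 0 i)).
    rewrite mulr_suml; apply: eq_bigr => j _; rewrite mulr_sumr.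
    by apply: eq_bigr => i _; ring.
  by rewrite skew_form0 mul0r.
have BB : \sum_j sqnorm (row j B) = \sum_j \sum_i B j i ^+ 2.
  by apply: eq_bigr => j _; apply: eq_bigr => i _; rewrite mxE.
clearbody s Y.
transitivity (s ^+ 2 * \sum_j sqnorm (row j B)
    - 2 * s * (\sum_j \sum_i B j i * c 0 j * y 0 i)
    + 2 * s * (\sum_j \sum_i B j i * y 0 j * c 0 i)
    + (\sum_j \sum_i c 0 j ^+ 2 * y 0 i ^+ 2)
    + (\sum_j \sum_i y 0 j ^+ 2 * c 0 i ^+ 2)
    - 2 * (\sum_j \sum_i c 0 j * y 0 i * y 0 j * c 0 i)); last first.
  by rewrite By1 By2 cy1 cy2 cy3; ring.
rewrite BB !mulr_sumr -!sumrN -!big_split /=; apply: eq_bigr => j _.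
by rewrite !mulr_sumr -!sumrN -!big_split /=; apply: eq_bigr => i _; ring.
Qed.

Lemma skew_row_bound :
  2 * sqnorm (c *m B) <= sqnorm c * \sum_j sqnorm (row j B).
Proof.
have [->|c_neq0] := eqVneq c 0; first by rewrite mul0mx sqnorm0 mulr0 mul0r.
have s_gt0 : 0 < sqnorm c by rewrite lt_def sqnorm_eq0 c_neq0 sqnorm_ge0.
rewrite -subr_ge0 -(pmulr_rge0 _ s_gt0) -skew_residual_sqnorm.
by apply: sumr_ge0 => j _; apply: sumr_ge0 => i _; exact: sqr_ge0.
Qed.

End SkewRowBound.

Section Gram.
Variables (R : realType) (n : nat).
Implicit Types (G E F N : 'M[R]_n) (u v x : 'rV[R]_n).

Lemma ipE G u v : ip G u v = (u *m G *m v^T) 0 0.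
Proof.
rewrite /ip mxE exchange_big /=; apply: eq_bigr => j _.
by rewrite [v^T j 0]mxE [(u *m G) 0 j]mxE mulr_suml.
Qed.

Lemma orthonormal_basis_gram G E :
  orthonormal_basis G E -> E *m G *m E^T = 1%:M.
Proof.
move=> onE; apply/matrixP => i j.
rewrite [RHS]mxE -(onE i j) ipE !mxE; apply: eq_bigr => k _.
by rewrite -row_mul tr_row !mxE.
Qed.

Lemma gram_unitmx G E : E *m G *m E^T = 1%:M -> E \in unitmx.
Proof. by rewrite -mulmxA => /mulmx1_unit[]. Qed.

Lemma gram_factor G E :
  E *m G *m E^T = 1%:M -> G = invmx E *m (invmx E)^T.
Proof.
move=> EGE; have uE := gram_unitmx EGE.
have uEt : E^T \in unitmx by rewrite unitmx_tr.
by rewrite trmx_inv -[G](mulKmx uE) -[E *m G](mulmxK uEt) EGE mul1mx.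
Qed.

Lemma ip_factor F u : ip (F *m F^T) u u = sqnorm (u *m F).
Proof. by rewrite ipE sqnormE trmx_mul !mulmxA. Qed.

Lemma orthonormal_skew_bound G E N x :
  orthonormal_basis G E -> (N *m G)^T = - (N *m G) ->
  2 * ip G (x *m N) (x *m N)
  <= ip G x x * \sum_(i < n) ip G (row i E *m N) (row i E *m N).
Proof.
move=> /orthonormal_basis_gram EGE skewNG.
have uE := gram_unitmx EGE; set F := invmx E.
have GE : G = F *m F^T := gram_factor EGE.
set B := E *m N *m F.
have skewB : B^T = - B.
  have -> : B = E *m (N *m G) *m E^T.
    by rewrite GE /B !mulmxA -[_ *m F^T *m E^T]mulmxA -trmx_mul mulmxV // trmx1 mulmx1.
  by rewrite trmx_mul trmxK trmx_mul skewNG mulNmx mulmxN mulmxA.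
have xE : x *m N *m F = (x *m F) *m B by rewrite /B !mulmxA mulmxKV.
rewrite GE !ip_factor xE.
under eq_bigr do rewrite ip_factor -!row_mul -/B.
exact: skew_row_bound.
Qed.

End Gram.

Definition nabla_mx {R : realType} {n : nat} (g : 'rV[R]_n -> 'M[R]_n)
    (X : 'rV[R]_n -> 'rV[R]_n) (p : 'rV[R]_n) : 'M[R]_n :=
  \matrix_(j, a) (coord_partial j (fun y => X y 0 a) p
                  + \sum_i christoffel g p a j i * X p 0 i).

Lemma lc_nabla_mx {R : realType} {n : nat} g X (p v : 'rV[R]_n) :
  lc_nabla g X p v = v *m nabla_mx g X p.
Proof.
apply/rowP => k; rewrite !mxE -big_split /=; apply: eq_bigr => j _.
rewrite !mxE mulrDr mulr_sumr; congr (_ + _); apply: eq_bigr => i _; ring.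
Qed.

Definition christoffel1 {R : realType} {n : nat} (g : 'rV[R]_n -> 'M[R]_n)
    (p : 'rV[R]_n) (j i b : 'I_n) : R :=
  2^-1 * (coord_partial j (fun y => g y i b) p + coord_partial i (fun y => g y j b) p
          - coord_partial b (fun y => g y j i) p).

Section LeviCivita.
Variables (R : realType) (n : nat) (U : set 'rV[R]_n) (g : 'rV[R]_n -> 'M[R]_n).
Hypothesis metric_g : riemannian_metric_on U g.

Lemma metric_symE x : U x -> forall i j, g x i j = g x j i.
Proof.
move=> Ux i j; have [_ /(_ x Ux) [gT _]] := metric_g.
by have := congr1 (fun M : 'M[R]_n => M j i) gT; rewrite mxE.
Qed.

Variable p : 'rV[R]_n.
Hypotheses (oU : open U) (Up : U p).

Lemma metric_unitmx : g p \in unitmx.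
Proof.
have [_ /(_ p Up) [_ pos_g]] := metric_g.
rewrite unitmxE unitfE; apply/negP => /det0P [v v_neq0 vg0].
by have := pos_g v v_neq0; rewrite ipE vg0 mul0mx mxE ltxx.
Qed.

Lemma partial_metric_sym k i j :
  coord_partial k (fun y => g y i j) p = coord_partial k (fun y => g y j i) p.
Proof.
apply: near_eq_derive; have : \forall y \near p, U y by apply: open_nbhs_nbhs.
by apply: filterS => y Uy; exact: metric_symE.
Qed.

Lemma christoffel_lower j i b :
  \sum_a christoffel g p a j i * g p a b = christoffel1 g p j i b.
Proof.
set C := fun l => coord_partial j (fun y => g y i l) p
  + coord_partial i (fun y => g y j l) p - coord_partial l (fun y => g y j i) p.
transitivity (2^-1 * \sum_l C l * (g p *m invmx (g p)) b l).
  rewrite mulr_sumr /christoffel.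
  under eq_bigr do rewrite mulr_sumr mulr_suml.
  rewrite exchange_big /=; apply: eq_bigr => l _.
  rewrite mxE !mulr_sumr; apply: eq_bigr => a _.
  by rewrite (metric_symE Up a b) /C; ring.
rewrite mulmxV ?metric_unitmx // (bigD1 b) //= big1 => [|l l_neq_b].
  by rewrite mxE eqxx mulr1 addr0.
by rewrite mxE eq_sym (negbTE l_neq_b) mulr0.
Qed.

Variable X : 'rV[R]_n -> 'rV[R]_n.

Lemma nabla_mx_lower j b :
  (nabla_mx g X p *m g p) j b =
  \sum_a coord_partial j (fun y => X y 0 a) p * g p a b
  + \sum_i X p 0 i * christoffel1 g p j i b.
Proof.
rewrite mxE; under eq_bigr do rewrite mxE mulrDl.
rewrite big_split /=; congr (_ + _).
under [RHS]eq_bigr do rewrite -christoffel_lower mulr_sumr.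
rewrite exchange_big /=; apply: eq_bigr => a _.
by rewrite mulr_suml; apply: eq_bigr => i _; ring.
Qed.

Lemma killing_nabla_skew :
  killing_on U g X -> (nabla_mx g X p *m g p)^T = - (nabla_mx g X p *m g p).
Proof.
move=> killing_X; apply/matrixP => b j; rewrite [LHS]mxE [RHS]mxE.
apply/eqP; rewrite -addr_eq0; apply/eqP.
rewrite !nabla_mx_lower -[RHS](killing_X p Up j b).
rewrite addrACA -!big_split /=; apply: eq_bigr => k _.
rewrite /christoffel1 (partial_metric_sym j k b) (partial_metric_sym k j b)
  (partial_metric_sym b j k) (metric_symE Up j k).
by field.
Qed.

End LeviCivita.

Theorem lemma4p10 (R : realType) (n : nat) (U : set 'rV[R]_n)
    (g : 'rV[R]_n -> 'M[R]_n) (X : 'rV[R]_n -> 'rV[R]_n) :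
  open U ->
  riemannian_metric_on U g ->
  smooth_vector_field_on U X ->
  killing_on U g X ->
  forall p : 'rV[R]_n, U p ->
  forall E : 'M[R]_n, orthonormal_basis (g p) E ->
    2 * ip (g p) (lc_nabla g X p (X p)) (lc_nabla g X p (X p))
    <= ip (g p) (X p) (X p) *
       \sum_(i < n) ip (g p) (lc_nabla g X p (row i E)) (lc_nabla g X p (row i E)).
Proof.
move=> oU metric_g _ killing_X p Up E onE.
rewrite !lc_nabla_mx; under eq_bigr do rewrite !lc_nabla_mx.
exact: orthonormal_skew_bound onE (killing_nabla_skew metric_g oU Up killing_X).
Qed.
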